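(* Let $\Delta$ be a finite set with $|\Delta|\ge2$, $\ell\ge2$, $\Omega=\Delta^\ell$, $W=\mathrm{Sym}\,\Delta\wr S_\ell$ in product action on $\Omega$, $G\le W$, and let $M$ be a minimal normal subgroup of $G$ transitive on $\Omega$, $M=T_1\times\cdots\times T_k$ with the $T_i$ isomorphic finite simple groups. Let $\Gamma$ be a connected graph with vertex set $\Omega$ with $G\le\mathrm{Aut}\,\Gamma$. Assume $\Gamma$ is $M$-arc-transitive, that $G\pi$ is transitive on $\{1,\dots,\ell\}$, and that $G\le G^{(1)}\wr(G\pi)$. Let $\alpha=(\alpha_1,\dots,\alpha_1)\in\Omega$, $\beta=(\beta_1,\dots,\beta_\ell)\in\Gamma(\alpha)$, and $K=G^{(1)}$. Then there is $h\in(K_{\alpha_1})^\ell$ with $\beta h=(\beta_1,\dots,\beta_1)$. Thus in the image graph $\Gamma h$ the tuples $(\alpha_1,\dots,\alpha_1)$ and $(\beta_1,\dots,\beta_1)$ are adjacent. Furthermore $G^h\le\mathrm{Aut}(\Gamma h)$ and $G^h\le G^{(1)}\wr(G\pi)$.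
   Context: Product action: $(\delta_1,\dots,\delta_\ell)^{(g_1,\dots,g_\ell)h}=(\delta_{1h^{-1}}g_{1h^{-1}},\dots,\delta_{\ell h^{-1}}g_{\ell h^{-1}})$. $\pi:W\to S_\ell$ is the natural projection. For $j$, $W_j$ is the stabiliser of $j$ under $\pi$, $W_j=\mathrm{Sym}\,\Delta\times(\mathrm{Sym}\,\Delta\wr S_{\ell-1})$ with the first factor on the $j$-th coordinate, and the component $G^{(j)}\le\mathrm{Sym}\,\Delta$ is the projection of $G\cap W_j$ onto the first factor. $G^{(1)}\wr(G\pi)$ denotes the subgroup $(G^{(1)})^\ell\rtimes G\pi$ of $W$. $K_{\alpha_1}$ is the stabiliser of $\alpha_1$ in $K$; $(K_{\alpha_1})^\ell\le(\mathrm{Sym}\,\Delta)^\ell$ acts coordinatewise. $\Gamma h$ is the graph on $\Omega$ whose edges are $\{xh,yh\}$ for edges $\{x,y\}$ of $\Gamma$. $\Gamma$ is $M$-arc-transitive if $M$ is transitive on ordered pairs of adjacent vertices; $\Gamma(\alpha)$ is the neighbourhood of $\alpha$. *)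

From HB Require Import structures.
From mathcomp Require Import all_boot all_fingroup all_solvable.
Set Implicit Arguments. Unset Strict Implicit. Unset Printing Implicit Defensive.

(* Omega = Delta^l, tuples indexed by 'I_l.  Permutations compose as right
   actions in MathComp: (s * t) x = t (s x), matching the paper. *)
Notation Omega D l := {ffun 'I_l -> D}.

Local Open Scope group_scope.
Section Wreath.
Variables (D : finType) (l : nat).

Definition prod_act (g : {ffun 'I_l -> {perm D}}) (h : {perm 'I_l})
  (d : Omega D l) : Omega D l :=
  [ffun i => g (h^-1 i) (d (h^-1 i))].

Lemma prod_act_inj g h : injective (prod_act g h).
Proof.
move=> x y /ffunP E; apply/ffunP => j; have := E (h j).
by rewrite !ffunE permK => /perm_inj.
Qed.

Definition wr_perm g h : {perm Omega D l} := perm (@prod_act_inj g h).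

Definition W : {set {perm Omega D l}} :=
  [set wr_perm gh.1 gh.2 | gh in [set: {ffun 'I_l -> {perm D}} * {perm 'I_l}]].

(* natural projection pi : W -> S_l (well defined on W when #|D| >= 2) *)
Definition piW (p : {perm Omega D l}) : {perm 'I_l} :=
  odflt 1 [pick h : {perm 'I_l} | [exists g, p == wr_perm g h]].

(* component G^(j): projection onto the j-th factor of G \cap W_j *)
Definition component (G : {set {perm Omega D l}}) (j : 'I_l) : {set {perm D}} :=
  [set x : {perm D} | [exists p in G, exists g, exists h,
     [&& p == wr_perm g h, h j == j & g j == x]]].

Definition wrS (K : {set {perm D}}) (H : {set {perm 'I_l}}) :
  {set {perm Omega D l}} :=
  [set wr_perm gh.1 gh.2 | gh in [set gh : {ffun 'I_l -> {perm D}} * {perm 'I_l}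
     | [forall i, gh.1 i \in K] && (gh.2 \in H)]].

End Wreath.
Arguments piW {D l} p.
Arguments component {D l} G j.
Arguments wrS {D l} K H.
Arguments wr_perm {D l} g h.
Arguments W D l : clear implicits.

Definition ord_first (l : nat) (h : 0 < l) : 'I_l := Ordinal h.

Section Graphs.
Variable V : finType.
Definition simple_graph (E : rel V) := symmetric E /\ irreflexive E.
Definition connected (E : rel V) := forall x y, connect E x y.
Definition autG (E : rel V) : {set {perm V}} :=
  [set p : {perm V} | [forall x, forall y, E (p x) (p y) == E x y]].
Definition arc_transitive (M : {set {perm V}}) (E : rel V) :=
  forall x y x' y', E x y -> E x' y' -> exists2 m, m \in M & m x = x' /\ m y = y'.
Definition image_graph (E : rel V) (h : {perm V}) : rel V :=
  fun x y => [exists u, exists v, [&& E u v, x == h u & y == h v]].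
End Graphs.

From mathcomp Require Import all_boot all_fingroup all_solvable.
Set Implicit Arguments. Unset Strict Implicit. Unset Printing Implicit Defensive.
Local Open Scope group_scope.

(* M is transitive on Delta^l, so |Delta|^l divides |M|; if M met the kernel
   of pi trivially it would embed in S_l, but for a prime p dividing |Delta|
   the p-part of l! is smaller than p^l (Legendre).  Minimality of M then
   forces M into the base group, so its elements act coordinatewise.  Given
   a coordinate i, pick g in G whose projection maps i to 1 and correct it by
   an element of M mapping (alpha, beta g) back to (alpha, beta): the resulting
   element of G fixes alpha and beta, and its coordinate at i lies in
   K_{alpha_1} and maps beta_i to beta_1.  Conjugating by the coordinatewise
   product h of these maps preserves G^(1) wr (G pi), which contains h. *)

Lemma sum_divn_exp_le p n m : 1 < p ->
  \sum_(1 <= k < m.+1) n %/ p ^ k + n %/ p ^ m <= n.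
Proof.
move=> p_gt1; elim: m => [|m IHm]; first by rewrite big_geq // expn0 divn1.
rewrite big_nat_recr //= -addnA; apply: leq_trans IHm; rewrite leq_add2l.
rewrite expnSr divnMA addnn -muln2; apply: leq_trans (leq_divM _ p).
by rewrite leq_mul2l p_gt1 orbT.
Qed.

Lemma logn_fact_lt p n : prime p -> 0 < n -> logn p n`! < n.
Proof.
move=> p_pr n_gt0; have p_gt1 := prime_gt1 p_pr; set m := trunc_log p n.
have pm_le_n : p ^ m <= n by apply: trunc_logP.
have m_le_n : m <= n by apply: leq_trans pm_le_n; apply/ltnW/ltn_expl.
have tail0 : \sum_(m.+1 <= k < n.+1) n %/ p ^ k = 0.
  rewrite big_nat_cond big1 // => k /andP[/andP[lt_mk _] _].
  apply/divn_small/(leq_trans (trunc_log_ltn n p_gt1)).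
  by rewrite leq_pexp2l // ltnW.
have top_gt0 : 0 < n %/ p ^ m by rewrite divn_gt0 ?expn_gt0 ?(ltnW p_gt1).
rewrite logn_fact // (big_cat_nat (n := m.+1)) //= ?ltnS // tail0 addn0.
apply: leq_trans (sum_divn_exp_le n m p_gt1).
by rewrite -[X in X < _]addn0 ltn_add2l.
Qed.

Lemma image_graphE (V : finType) (E : rel V) (h : {perm V}) u v :
  image_graph E h u v = E (h^-1 u) (h^-1 v).
Proof.
apply/existsP/idP => [[u' /existsP[v' /and3P[e /eqP -> /eqP ->]]]|e].
  by rewrite !permK.
by exists (h^-1 u); apply/existsP; exists (h^-1 v); rewrite e !permKV !eqxx.
Qed.

Lemma autG_image_graph (V : finType) (E : rel V) (h : {perm V}) :
  autG E :^ h \subset autG (image_graph E h).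
Proof.
apply/subsetP => z; rewrite mem_conjg !inE => /forallP autz.
apply/forallP => u; apply/forallP => v; have /forallP/(_ (h^-1 v)) := autz (h^-1 u).
by rewrite !image_graphE !conjgE invgK !permM !permKV.
Qed.

Section WreathProduct.
Variables (D : finType) (l : nat).
Implicit Types (g : {ffun 'I_l -> {perm D}}) (h : {perm 'I_l}) (d : Omega D l).

Lemma wr_permE g h d i : wr_perm g h d i = g (h^-1 i) (d (h^-1 i)).
Proof. by rewrite /wr_perm permE /prod_act ffunE. Qed.

Lemma wr_permE_perm g h d j : wr_perm g h d (h j) = g j (d j).
Proof. by rewrite wr_permE permK. Qed.

Lemma wr_permM g h g' h' :
  wr_perm g h * wr_perm g' h' = wr_perm [ffun j => g j * g' (h j)] (h * h').
Proof.
apply/permP => d; apply/ffunP => i; rewrite permM -(permKV (h * h') i).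
by rewrite wr_permE_perm ffunE [in LHS]permM !wr_permE_perm permM.
Qed.

Lemma wr_perm1 : wr_perm [ffun=> 1] 1 = 1 :> {perm Omega D l}.
Proof. by apply/permP => d; apply/ffunP => i; rewrite wr_permE !ffunE invg1 !perm1. Qed.

Lemma mem_wr_perm_W g h : wr_perm g h \in W D l.
Proof. by apply/imsetP; exists (g, h); rewrite ?inE. Qed.

Lemma W_group_set : group_set (W D l).
Proof.
apply/group_setP; split; first by rewrite -wr_perm1 mem_wr_perm_W.
by move=> _ _ /imsetP[[g h] _ ->] /imsetP[[g' h'] _ ->]; rewrite wr_permM mem_wr_perm_W.
Qed.

Canonical W_group := Group W_group_set.

Lemma component_group_set (G : {group {perm Omega D l}}) j :
  group_set (component G j).
Proof.
apply/group_setP; split.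
  rewrite inE; apply/exists_inP; exists 1; rewrite ?group1 //.
  apply/existsP; exists [ffun=> 1].
  by apply/existsP; exists 1; rewrite wr_perm1 perm1 ffunE !eqxx.
move=> a b; rewrite !inE.
case/exists_inP=> p pG /existsP[ga /existsP[ha /and3P[/eqP def_p /eqP haj /eqP <-]]].
case/exists_inP=> q qG /existsP[gb /existsP[hb /and3P[/eqP def_q /eqP hbj /eqP <-]]].
apply/exists_inP; exists (p * q); first exact: groupM.
apply/existsP; exists [ffun k => ga k * gb (ha k)]; apply/existsP; exists (ha * hb).
by rewrite def_p def_q wr_permM permM haj hbj ffunE haj !eqxx.
Qed.

Canonical component_group G j := Group (component_group_set G j).

Lemma wrS_group_set (K : {group {perm D}}) (H : {group {perm 'I_l}}) :
  group_set (wrS K H).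
Proof.
apply/group_setP; split.
  rewrite -wr_perm1; apply/imsetP; exists ([ffun=> 1], 1); rewrite // inE group1 andbT.
  by apply/forallP => i; rewrite ffunE group1.
move=> x y /imsetP[[g h] /[!inE] /andP[/forallP /= gK hH] ->].
move=> /imsetP[[g' h'] /[!inE] /andP[/forallP /= g'K h'H] ->].
rewrite wr_permM; apply/imsetP; exists ([ffun j => g j * g' (h j)], h * h') => //.
by rewrite inE groupM // andbT; apply/forallP => j; rewrite ffunE groupM.
Qed.

Canonical wrS_group K H := Group (wrS_group_set K H).

Section NontrivialDelta.
Hypothesis D_gt1 : 1 < #|D|.

Lemma wr_perm_inj g h g' h' : wr_perm g h = wr_perm g' h' -> g = g' /\ h = h'.
Proof.
move=> eq_gh.
have /card_gt1P[x [y [_ _ x_neq_y]]] := D_gt1.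
have eq_hV i : h^-1 i = h'^-1 i.
  apply/eqP/negPn/negP => neq_hV.
  pose dx : Omega D l := [ffun=> x].
  pose dy : Omega D l := [ffun t => if t == h^-1 i then y else x].
  have := congr1 (fun p : {perm Omega D l} => p dy i) eq_gh.
  rewrite /= !wr_permE !ffunE eqxx eq_sym (negbTE neq_hV).
  have := congr1 (fun p : {perm Omega D l} => p dx i) eq_gh.
  by rewrite /= !wr_permE !ffunE => <- /perm_inj /eqP; rewrite eq_sym (negbTE x_neq_y).
have eq_h : h = h' by apply: invg_inj; apply/permP => i; rewrite eq_hV.
subst h'; split => //; apply/ffunP => j; apply/permP => z.
have := congr1 (fun p : {perm Omega D l} => p [ffun=> z] (h j)) eq_gh.
by rewrite /= !wr_permE_perm !ffunE.
Qed.

Lemma piW_wr_perm g h : piW (wr_perm g h) = h.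
Proof.
rewrite /piW; case: pickP => [h' /existsP[g' /eqP /wr_perm_inj[_ ->]] | none] //=.
by have /existsP[] := negbT (none h); exists g.
Qed.

Lemma W_wr_perm_piW p : p \in W D l -> exists g, p = wr_perm g (piW p).
Proof. by case/imsetP=> [[g h] _ ->]; exists g; rewrite piW_wr_perm. Qed.

Lemma piW_morphM : {in W_group &, {morph piW : x y / x * y}}.
Proof.
move=> _ _ /imsetP[[g h] _ ->] /imsetP[[g' h'] _ ->].
by rewrite wr_permM !piW_wr_perm.
Qed.

Definition piW_morphism := Morphism piW_morphM.

Lemma mem_wrS (K : {set {perm D}}) (H : {set {perm 'I_l}}) g h :
  (wr_perm g h \in wrS K H) = [forall i, g i \in K] && (h \in H).
Proof.
apply/imsetP/idP => [[[g' h'] /[!inE] gh'KH /wr_perm_inj[-> ->]] // | ghKH].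
by exists (g, h); rewrite ?inE.
Qed.

Lemma transitive_meets_ker_piW (M : {group {perm Omega D l}}) :
  0 < l -> M \subset W D l -> [transitive M, on [set: Omega D l] | 'P] ->
  M :&: 'ker piW_morphism != 1.
Proof.
move=> l_gt0 sMW trM; apply/negP => /eqP trivMker.
have card_imM : #|piW_morphism @* M| = #|M|.
  by rewrite card_morphim (setIidPr sMW) -indexgI trivMker indexg1.
have M_dvd_fact : #|M| %| l`! by rewrite -card_imM -card_Sn -cardsT cardSg ?subsetT.
have /card_gt1P[x _] := D_gt1.
have exp_dvd_M : (#|D| ^ l %| #|M|)%N.
  have card_Omega : #|[set: Omega D l]| = (#|D| ^ l)%N by rewrite cardsT card_ffun card_ord.
  by rewrite -card_Omega -(atransP trM [ffun=> x]) ?inE // card_orbit dvdn_indexg.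
have p_pr := pdiv_prime D_gt1.
have : (pdiv #|D| ^ l %| l`!)%N.
  by rewrite (dvdn_trans _ M_dvd_fact) // (dvdn_trans _ exp_dvd_M) // dvdn_exp2r ?pdiv_dvd.
by rewrite pfactor_dvdn ?fact_gt0 // leqNgt logn_fact_lt.
Qed.

Lemma minnormal_transitive_sub_ker_piW (G M : {group {perm Omega D l}}) :
  0 < l -> G \subset W D l -> M <| G -> minnormal M G ->
  [transitive M, on [set: Omega D l] | 'P] -> M \subset 'ker piW_morphism.
Proof.
move=> l_gt0 sGW /andP[sMG nMG] /mingroupP[_ minM] trM.
rewrite -(minM (M :&: 'ker piW_morphism)%G) ?subsetIr ?subsetIl //=.
rewrite transitive_meets_ker_piW ?(subset_trans sMG) //=.
exact: normsI nMG (subset_trans sGW (ker_norm _)).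
Qed.

Lemma exists_coordinate_map (G M : {group {perm Omega D l}}) (E : rel (Omega D l))
    (K : {set {perm D}}) (H : {set {perm 'I_l}}) alpha1 beta (i o : 'I_l) :
  G \subset W D l -> M \subset G -> M \subset 'ker piW_morphism ->
  G \subset wrS K H -> G \subset autG E -> arc_transitive M E ->
  [transitive piW @: G, on [set: 'I_l] | 'P] -> E [ffun=> alpha1] beta ->
  exists2 f, f \in K & f alpha1 = alpha1 /\ f (beta i) = beta o.
Proof.
move=> sGW sMG sMker sGwr autGE arcM trG Eab; set alpha := [ffun=> alpha1] in Eab *.
have [y [yG y_alpha y_beta y_io]] :
    exists y, [/\ y \in G, y alpha = alpha, y beta = beta & piW y i = o].
  rewrite -(morphimEsub piW_morphism sGW) in trG.
  have [_ /morphimP[x _ xG ->] ->] := atransP2 trG (in_setT i) (in_setT o).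
  have Ex : E (x alpha) (x beta).
    by have := subsetP autGE x xG; rewrite inE => /forallP/(_ _)/forallP/(_ _)/eqP->.
  have [m mM [m_alpha m_beta]] := arcM _ _ _ _ Ex Eab.
  have mG := subsetP sMG m mM; exists (x * m); rewrite groupM // !permM m_alpha m_beta.
  have /= pim1 := mker (subsetP sMker m mM).
  by rewrite piW_morphM ?(subsetP sGW) // pim1 mulg1.
have [g def_y] := W_wr_perm_piW (subsetP sGW y yG).
have /forallP gK : [forall j, g j \in K].
  by have := subsetP sGwr y yG; rewrite def_y mem_wrS => /andP[].
have y_coord d : y d o = g i (d i) by rewrite -y_io {1}def_y wr_permE_perm.
exists (g i) => //; split.
  by have := congr1 (fun d => d o) y_alpha; rewrite /= y_coord !ffunE.
by rewrite -y_coord y_beta.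
Qed.

End NontrivialDelta.
End WreathProduct.

Arguments piW_morphism {D l} D_gt1.

Theorem lemma3p3 (D : finType) (l : nat) (hD : 2 <= #|D|) (hl : 1 < l)
  (G M : {group {perm Omega D l}}) (E : rel (Omega D l))
  (alpha1 : D) (beta : Omega D l) :
  G \subset W D l ->
  (M <| G)%g -> minnormal M G ->
  [transitive M, on [set: Omega D l] | 'P] ->
  (exists k (Ts : 'I_k -> {group {perm Omega D l}}),
     \big[dprod/1%g]_(i < k) Ts i = M /\
     (forall i, simple (Ts i)) /\ (forall i j, Ts i \isog Ts j)) ->
  simple_graph E -> connected E -> G \subset autG E ->
  arc_transitive M E ->
  [transitive piW @: G, on [set: 'I_l] | 'P] ->
  G \subset wrS (component G (ord_first (ltnW hl))) (piW @: G) ->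
  E [ffun=> alpha1] beta ->
  let K := component G (ord_first (ltnW hl)) in
  exists2 g : {ffun 'I_l -> {perm D}},
    (forall i, g i \in K /\ g i alpha1 = alpha1) &
    let h := wr_perm g 1%g in
    [/\ h beta = [ffun=> beta (ord_first (ltnW hl))],
        image_graph E h [ffun=> alpha1] [ffun=> beta (ord_first (ltnW hl))],
        (G :^ h)%g \subset autG (image_graph E h) &
        (G :^ h)%g \subset wrS K (piW @: G)].
Proof.
move=> sGW nMG minM trM _ _ _ autGE arcM trG sGwr Eab K.
set o := ord_first (ltnW hl).
have sMker := minnormal_transitive_sub_ker_piW hD (ltnW hl) sGW nMG minM trM.
have [f fK f_fix] := fin_all_exists2 (fun i =>
  exists_coordinate_map i o sGW (normal_sub nMG) sMker sGwr autGE arcM trG Eab).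
exists [ffun i => f i] => [i | h]; first by rewrite ffunE; split; [exact: fK | case: (f_fix i)].
have h_coord d i : h d i = f i (d i) by rewrite /h wr_permE invg1 perm1 ffunE.
have h_alpha : h [ffun=> alpha1] = [ffun=> alpha1].
  by apply/ffunP => i; rewrite h_coord !ffunE; case: (f_fix i).
have h_beta : h beta = [ffun=> beta o].
  by apply/ffunP => i; rewrite h_coord ffunE; case: (f_fix i).
have imG : piW @: G = piW_morphism hD @* G by rewrite morphimEsub.
have h_wrS : h \in wrS_group K (piW_morphism hD @* G).
  by rewrite mem_wrS // group1 andbT; apply/forallP => i; rewrite ffunE fK.
split => //.
- by rewrite -h_alpha -h_beta image_graphE !permK.
- by apply: subset_trans (autG_image_graph E h); rewrite conjSg.
- by rewrite imG -(conjGid h_wrS) conjSg /= -imG.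
Qed.
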